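(* Let $10\le n\le 12$, and let $\frac{p_1}{q_1},\frac{p_2}{q_2},\frac{p_3}{q_3},\dots$ be the convergents (in lowest terms) of the simple continued fraction expansion of $\sqrt n$, indexed so that $\frac{p_1}{q_1}=\frac31$. (1) For each positive odd integer $k$, set $d_k=\frac12(p_k-3)$, $m_k=\frac12(q_k-1)$ and $D_k=d_kH-m_kE$. Then $D_k$ is an integral effective divisor class with $\chi(D_k)=1$ and $2B\cdot D_k<B\cdot K$. (2) If $D$ is an effective divisor class with $\chi(D)\ge1$ and there is an ample divisor $A_t$ with $2A_t\cdot D<A_t\cdot K$, then $D=D_k$ for some positive odd integer $k$.
   Context: Let $X$ be the blowup of $\mathbb{P}^2_{\mathbb{C}}$ at $n$ very general points, with $H$ the pullback of a line class, $E_i$ the exceptional divisors, $E=\sum_iE_i$, and $K=K_X=-3H+E$. For real $t$, $A_t=tH-E$, and $B=\sqrt nH-E$. Write $\chi(D)=\chi(\mathcal{O}_X(D))$; effective means the class of an effective divisor (zero allowed). *)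

From mathcomp Require Import all_boot all_order all_algebra.
From mathcomp Require Import Rstruct.
From mathcomp.real_closed Require Import complex.
From mathcomp Require Import mpoly.
Import GRing.Theory Num.Theory.

Set Implicit Arguments.
Unset Strict Implicit.
Unset Printing Implicit Defensive.

Local Open Scope ring_scope.

Definition RR : Type := Rdefinitions.R.
Definition CC : Type := (Rdefinitions.R)[i].

(* Divisor classes on X = Bl_{p_1..p_n} P^2.  Pic X = Z H + sum Z E_i. *)
(* A (real) class  a H - sum_i u_i E_i  is represented by (a, u).      *)
(* Intersection form: H^2 = 1, E_i^2 = -1, H.E_i = 0, E_i.E_j = 0.     *)
Definition dot (n : nat) (a : RR) (u : 'I_n -> RR) (b : RR) (v : 'I_n -> RR)
  : RR := a * b - \sum_(i < n) u i * v i.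

Definition rdeg (d : int) : RR := d%:~R.
Definition rmul (n : nat) (m : 'I_n -> int) : 'I_n -> RR := fun i => (m i)%:~R.

(* K = -3H + E = -3 H - sum_i (-1) E_i *)
Definition K_deg : RR := -3.
Definition K_mul (n : nat) : 'I_n -> RR := fun _ => -1.

(* E = sum_i E_i, so A_t = tH - E and B = sqrt(n) H - E have all u_i = 1 *)
Definition E_mul (n : nat) : 'I_n -> RR := fun _ => 1.
Definition B_deg (n : nat) : RR := Num.sqrt (n%:R).

(* Euler characteristic chi(O_X(D)) via Riemann-Roch on the rational
   surface X (chi(O_X) = 1):  chi(D) = 1 + (D.D - D.K)/2.              *)
Definition chi (n : nat) (d : int) (m : 'I_n -> int) : RR :=
  1 + (dot (rdeg d) (rmul m) (rdeg d) (rmul m)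
       - dot (rdeg d) (rmul m) K_deg (@K_mul n)) / 2.

(* Effectivity.  The points p_i = (X i, Y i) lie in the affine chart   *)
(* C^2 of P^2.  A class d H - sum m_i E_i is effective iff there is a  *)
(* nonzero plane curve of degree d (dehomogenized: a nonzero           *)
(* polynomial of total degree <= d) with multiplicity >= max(m_i,0) at *)
(* each p_i.                                                           *)

(* f vanishes to order >= k at (a,b): all monomials of degree < k of
   f(x + a, y + b) have zero coefficient *)
Definition mult_ge (f : {mpoly CC[2]}) (a b : CC) (k : nat) : Prop :=
  forall mo : 'X_{1..2}, (mdeg mo < k)%N ->
    (f \mPo [tuple 'X_0 + a%:MP; 'X_1 + b%:MP])@_mo = 0.

Definition effective (n : nat) (X Y : 'I_n -> CC) (d : int) (m : 'I_n -> int)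
  : Prop :=
  exists f : {mpoly CC[2]},
    f != 0 /\ ((msize f)%:Z <= d + 1) /\
    forall i : 'I_n, mult_ge f (X i) (Y i) (absz (Num.max (m i) 0)).

(* Ampleness of the real divisor class a H - sum u_i E_i, via the
   Nakai-Moishezon criterion for R-divisors on a surface: D^2 > 0 and
   D.C > 0 for every curve C (equivalently every nonzero effective class). *)
Definition ample (n : nat) (X Y : 'I_n -> CC) (a : RR) (u : 'I_n -> RR) : Prop :=
  0 < dot a u a u /\
  forall (d : int) (m : 'I_n -> int), effective X Y d m ->
    ~ (d = 0 /\ forall i, m i = 0) ->
    0 < dot a u (rdeg d) (rmul m).

(* Very general configurations of n points: the property holds outside *)
(* a countable union of proper Zariski-closed subsets of (C^2)^n, i.e. *)
(* outside the union of the zero sets of countably many nonzero        *)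
(* polynomials in the 2n coordinates.                                  *)
Definition coords (n : nat) (X Y : 'I_n -> CC) : 'I_(n + n) -> CC :=
  fun j => match split j with inl i => X i | inr i => Y i end.

Definition very_general (n : nat) (P : ('I_n -> CC) -> ('I_n -> CC) -> Prop)
  : Prop :=
  exists F : nat -> {mpoly CC[n + n]},
    (forall j, F j != 0) /\
    forall X Y : 'I_n -> CC,
      (forall j, (F j).@[coords X Y] != 0) -> P X Y.

(* Simple continued fraction of a real x: x_0 = x, x_{k+1} = 1/(x_k -  *)
(* floor x_k), a_k = floor x_k.  Convergents P_k/Q_k with P_0 = 1,     *)
(* Q_0 = 0, P_1 = a_0, Q_1 = 1, P_{k+1} = a_k P_k + P_{k-1}, etc., so  *)
(* that P_1/Q_1 = a_0/1 (the paper's indexing: p_1/q_1 = 3/1).         *)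
Fixpoint cf_rem (x : RR) (k : nat) : RR :=
  match k with
  | 0 => x
  | k'.+1 => (cf_rem x k' - (Num.floor (cf_rem x k'))%:~R)^-1
  end.

Definition cf_a (x : RR) (k : nat) : int := Num.floor (cf_rem x k).

(* cf_PQ x k = ((P_k, Q_k), (P_{k+1}, Q_{k+1})) *)
Fixpoint cf_PQ (x : RR) (k : nat) : (int * int) * (int * int) :=
  match k with
  | 0 => ((1, 0), (cf_a x 0, 1))
  | k'.+1 =>
      let: ((p0, q0), (p1, q1)) := cf_PQ x k' in
      ((p1, q1), (cf_a x k * p1 + p0, cf_a x k * q1 + q0))
  end.

Definition conv_p (x : RR) (k : nat) : int := (cf_PQ x k).1.1.
Definition conv_q (x : RR) (k : nat) : int := (cf_PQ x k).1.2.

Definition dk (n k : nat) : int := ((conv_p (Num.sqrt (n%:R)) k - 3) %/ 2)%Z.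
Definition mk (n k : nat) : int := ((conv_q (Num.sqrt (n%:R)) k - 1) %/ 2)%Z.

(* Write n = 9 + c with c e = 6 (c = 1, 2, 3).  Then sqrt n = [3; e, 6, e, 6, ...], and the
   odd convergents p/q are exactly the positive solutions of p^2 - n q^2 = -c: they form the
   orbit of 3 + sqrt n under multiplication by the unit (3e + 1) + e sqrt n, and a descent
   along that unit reaches every solution.  For p = 2d + 3, q = 2m + 1 and D = dH - mE the
   Pell equation reads D.(D - K) = d(d + 3) - n m(m + 1) = 0, i.e. chi(D) = 1.  Then curves of
   degree d have more coefficients than the n m(m + 1)/2 conditions imposed by multiplicity m
   at the points, so D is effective, and p < q sqrt n is 2 B.D < B.K.
   Conversely, if chi(D) >= 1 and 2 A_t.D < A_t.K with A_t ample (so t > sqrt n), then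
   n (2d + 3)^2 < (n + 2M)^2 with M = sum m_i, and the identity
     (n + 2M)^2 - n (2d + 3)^2 = n (n - 9) - 4 (n sum m_i^2 - M^2) - 4n D.(D - K)
   leaves no room for n <= 12 unless D.(D - K) = 0 and all m_i are equal; so (2d + 3, 2m + 1)
   solves the Pell equation and D = D_k.  None of this depends on the position of the points. *)

From mathcomp Require Import all_boot all_order all_algebra.
From mathcomp Require Import Rstruct.
From mathcomp.real_closed Require Import complex.
From mathcomp Require Import mpoly.
From mathcomp Require Import ring lra zify.
Import Order.TTheory GRing.Theory Num.Theory.

Set Implicit Arguments.
Unset Strict Implicit.
Unset Printing Implicit Defensive.

Lemma mdeg2 (mo : 'X_{1..2}) : mdeg mo = (mo ord0 + mo ord_max)%N.
Proof. by rewrite mdegE big_ord_recl big_ord1; congr (_ + mo _); apply: val_inj. Qed.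

Lemma card_triangle (b : nat) :
  #|[pred p : 'I_b * 'I_b | p.1 + p.2 < b]| * 2 = b * b.+1.
Proof.
rewrite -sum1_card big_mkcond /=.
rewrite -(pair_big xpredT xpredT (fun i j : 'I_b => if i + j < b then 1 else 0)) /=.
have row_count (i : 'I_b) : \sum_(j < b) (if i + j < b then 1 else 0) = b - i.
  rewrite -big_mkcond (eq_bigl (fun j : 'I_b => j < b - i)) => [|j]; last by rewrite ltn_subRL.
  by rewrite -(big_ord_widen _ (fun=> 1)) ?leq_subr // sum1_card card_ord.
rewrite (eq_bigr _ (fun i _ => row_count i)).
elim: b {row_count} => [|b IH]; first by rewrite big_ord0.
rewrite big_ord_recl subn0 (eq_bigr (fun i : 'I_b => b - i)) => [|i _].
  by rewrite mulnDl IH; lia.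
by rewrite /bump /= subSS.
Qed.

Lemma card_bmultinom2 (b : nat) : #|{: 'X_{1..2 < b}}| * 2 = b * b.+1.
Proof.
have lt_b (mo : 'X_{1..2 < b}) i : mo i < b.
  by apply: leq_ltn_trans (bmdeg mo); rewrite mdegE (bigD1 i) //= leq_addr.
pose f mo := (Ordinal (lt_b mo ord0), Ordinal (lt_b mo ord_max)).
have f_inj : injective f.
  move=> mo mo' /(congr1 (fun p => (val p.1, val p.2))) [h0 h1].
  apply/val_inj/mnmP => i; have [->|->] : i = ord0 \/ i = ord_max.
    by case: i => [[|[|//]] hi]; [left | right]; apply: val_inj.
  - exact: h0.
  - exact: h1.
rewrite -(card_image f_inj) -(card_triangle b); congr (_ * _); apply: eq_card => p.
apply/imageP/idP => [[mo _ ->] | hp]; first by rewrite inE /= -mdeg2 bmdeg.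
have hdeg : mdeg [multinom [tuple (p.1 : nat); (p.2 : nat)]] < b.
  by rewrite mdeg2 !mnm_tnth.
exists (BMultinom hdeg) => //.
by case: p hp hdeg => p1 p2 *; congr (_, _); apply: val_inj; rewrite /= mnm_tnth.
Qed.

Local Open Scope ring_scope.

Lemma effective_of_dim_count (N : nat) (X Y : 'I_N -> CC) (d : nat) (m : 'I_N -> nat) :
  (\sum_i m i * (m i).+1 < d.+1 * d.+2)%N -> effective X Y d (fun i => m i).
Proof.
move=> dim_lt.
pose Dom := 'X_{1..2 < d.+1}.
pose Cod := {i : 'I_N & 'X_{1..2 < m i}}.
pose shift i : 2.-tuple {mpoly CC[2]} := [tuple 'X_0 + (X i)%:MP; 'X_1 + (Y i)%:MP].
(* Rows: monomials of degree <= d; columns: Taylor coefficients of order < m i at point i. *)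
pose A : 'M[CC]_(#|{: Dom}|, #|{: Cod}|) := \matrix_(r, s)
  ('X_[bmnm (enum_val r)] \mPo shift (tag (enum_val s)))@_(bmnm (tagged (enum_val s))).
have card_lt : (#|{: Cod}| < #|{: Dom}|)%N.
  rewrite -(ltn_pmul2r (_ : 0 < 2)%N) // card_bmultinom2 card_tagged.
  rewrite sumnE big_map big_enum /= big_distrl /=.
  by under eq_bigr do rewrite card_bmultinom2.
have [v vA v0] : exists2 v : 'rV[CC]_#|{: Dom}|, v *m A = 0 & v != 0.
  have /rowV0Pn[v /sub_kermxP vA v0] : kermx A != 0.
    by rewrite kermx_eq0 -row_leq_rank -ltnNge (leq_ltn_trans (rank_leq_col A)).
  by exists v.
exists (\sum_r v 0 r *: 'X_[bmnm (enum_val r)]); split; [|split].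
- have [r0 vr0] := rV0Pn v v0.
  apply: contraNneq vr0 => /(congr1 (mcoeff (bmnm (enum_val r0)))).
  rewrite mcoeff0 raddf_sum (bigD1 r0) //= big1 => [|r neq_r]; rewrite mcoeffZ mcoeffX.
    by rewrite eqxx mulr1 addr0 => ->.
  by rewrite (inj_eq val_inj) (inj_eq enum_val_inj) (negPf neq_r) mulr0.
- have -> : d%:Z + 1 = d.+1 by rewrite -addn1 PoszD.
  rewrite lez_nat.
  apply: (big_ind (fun p : {mpoly CC[2]} => msize p <= d.+1)%N) => [|p q|r _].
  + by rewrite msize0.
  + by move=> hp hq; rewrite (leq_trans (msizeD_le p q)) // geq_max hp hq.
  + by rewrite (leq_trans (mmeasureZ_le _ _ _)) // msizeX bmdeg.
- move=> i mo; rewrite max_l ?absz_nat // => hmo.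
  pose c : Cod := Tagged (fun i => 'X_{1..2 < m i}) (BMultinom hmo).
  have := congr1 (fun M : 'rV_#|{: Cod}| => M 0 (enum_rank c)) vA.
  rewrite !mxE => <-; rewrite (big_morph _ (comp_mpolyD _) (comp_mpoly0 _)) raddf_sum.
  apply: eq_bigr => r _.
  by rewrite !mxE enum_rankK /= comp_mpolyZ mcoeffZ.
Qed.

Section Intersections.
Variable n : nat.

Lemma dot_E (t : RR) (d : int) (m : 'I_n -> int) :
  dot t (@E_mul n) (rdeg d) (rmul m) = t * d%:~R - (\sum_i m i)%:~R.
Proof. by rewrite /dot rmorph_sum; under eq_bigr do rewrite /E_mul mul1r. Qed.

Lemma dot_EE (t : RR) : dot t (@E_mul n) t (@E_mul n) = t ^+ 2 - n%:R.
Proof.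
by rewrite /dot expr2; under eq_bigr do rewrite /E_mul mulr1; rewrite sumr_const card_ord.
Qed.

Lemma dot_EK (t : RR) : dot t (@E_mul n) K_deg (@K_mul n) = n%:R - 3 * t.
Proof.
rewrite /dot; under eq_bigr do rewrite /E_mul /K_mul mul1r.
by rewrite sumr_const card_ord -mulr_natl /K_deg; ring.
Qed.

Lemma chiE (d : int) (m : 'I_n -> int) :
  chi d m = 1 + (d * (d + 3) - \sum_i m i * (m i + 1))%:~R / 2.
Proof.
rewrite /chi /dot /rdeg /K_deg /K_mul /rmul.
under [\sum_i _ * -1]eq_bigr do rewrite mulrN1.
rewrite sumrN rmorphB rmorph_sum /=; under [in RHS]eq_bigr do rewrite rmorphM rmorphD.
rewrite rmorphM rmorphD /=; under [in RHS]eq_bigr do rewrite mulrDr mulr1.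
rewrite big_split /= (_ : 3%:~R = 3 :> RR) //; ring.
Qed.

End Intersections.

Lemma effective_H (n : nat) (X Y : 'I_n -> CC) : effective X Y 1 (fun _ => 0).
Proof.
exists 1; split; first exact: oner_neq0.
by split=> [|i mo]; [rewrite msize1 | rewrite max_l].
Qed.

Lemma effective_deg_ge0 (n : nat) (X Y : 'I_n -> CC) d m : effective X Y d m -> 0 <= d.
Proof.
case=> f [f0 [szf _]]; have : (0 < msize f)%N by rewrite lt0n msize_poly_eq0.
lia.
Qed.

Lemma ample_At_gt (n : nat) (X Y : 'I_n -> CC) (t : RR) :
  ample X Y t (@E_mul n) -> 0 < t /\ n%:R < t ^+ 2.
Proof.
case=> EE_gt0 /(_ 1 (fun _ => 0) (effective_H X Y)) EH_gt0; split.
  by move: EH_gt0; rewrite dot_E big1 // mulr1 subr0; apply; case.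
by rewrite dot_EE subr_gt0 in EE_gt0.
Qed.

Lemma sqr_lt_of_mul_lt (R : realDomainType) (n t x y : R) :
  n < t ^+ 2 -> 0 < t -> 0 < x -> t * x < y -> n * x ^+ 2 < y ^+ 2.
Proof.
move=> n_lt t_gt0 x_gt0 txy.
have tx_gt0 : 0 < t * x by rewrite mulr_gt0.
apply: (lt_trans (y := (t * x) ^+ 2)); first by rewrite exprMn ltr_pM2r ?exprn_gt0.
by rewrite ltr_pXn2r // ?nnegrE ltW // (lt_trans tx_gt0).
Qed.

Lemma sqrt_mul_lt (R : rcfType) (n p q : R) :
  0 <= p -> 0 <= q -> p ^+ 2 < n * q ^+ 2 -> Num.sqrt n * p < n * q.
Proof.
move=> p_ge0 q_ge0 lt_pq.
have n_gt0 : 0 < n.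
  rewrite ltNge; apply: contraTN lt_pq => n_le0; rewrite -leNgt.
  exact: le_trans (mulr_le0_ge0 n_le0 (sqr_ge0 q)) (sqr_ge0 p).
have sn_gt0 : 0 < Num.sqrt n by rewrite sqrtr_gt0.
rewrite -{2}(sqr_sqrtr (ltW n_gt0)) expr2 -mulrA ltr_pM2l //.
rewrite -(ltr_pXn2r (_ : 0 < 2)%N) ?nnegrE ?mulr_ge0 ?sqrtr_ge0 //.
by rewrite exprMn sqr_sqrtr ?ltW.
Qed.

Lemma sum_sqr_diff (R : comPzRingType) (n : nat) (m : 'I_n -> R) :
  \sum_i \sum_j (m i - m j) ^+ 2 = 2 * (n%:R * \sum_i m i ^+ 2 - (\sum_i m i) ^+ 2).
Proof.
have row_sum i : \sum_j (m i - m j) ^+ 2 =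
    n%:R * m i ^+ 2 + \sum_j m j ^+ 2 - 2 * m i * \sum_j m j.
  rewrite (eq_bigr (fun j => m i ^+ 2 + m j ^+ 2 - 2 * m i * m j)) => [|j _]; last by ring.
  by rewrite sumrB big_split /= sumr_const card_ord -mulr_sumr -[_ *+ n]mulr_natl.
rewrite (eq_bigr _ (fun i _ => row_sum i)) sumrB big_split /= sumr_const card_ord.
rewrite -mulr_suml -mulr_sumr -mulr_sumr -mulr_natl; ring.
Qed.

Lemma variance_ge0 (R : realDomainType) (n : nat) (m : 'I_n -> R) :
  0 <= n%:R * \sum_i m i ^+ 2 - (\sum_i m i) ^+ 2.
Proof.
have : 0 <= \sum_i \sum_j (m i - m j) ^+ 2.
  by apply: sumr_ge0 => i _; apply: sumr_ge0 => j _; apply: sqr_ge0.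
by rewrite sum_sqr_diff pmulr_rge0.
Qed.

Lemma const_of_variance_lt (n : nat) (m : 'I_n -> int) :
  n%:R * \sum_i m i ^+ 2 - (\sum_i m i) ^+ 2 < n%:R - 1 -> forall i j, m i = m j.
Proof.
move=> V_lt i j; apply/eqP; apply: contraTT V_lt => neq_ij; rewrite -leNgt.
pose a x : int := (m x == m i)%:R.
(* Each pair (x, y) with exactly one of m x, m y equal to m i contributes at least 1,
   and there are 2 A (n - A) >= 2 (n - 1) of them. *)
have pair_le x y : a x * (1 - a y) + (1 - a x) * a y <= (m x - m y) ^+ 2.
  rewrite /a; case: (eqVneq (m x) (m i)) => [->|nx]; case: (eqVneq (m y) (m i)) => [->|ny];
    rewrite ?eqxx ?(negPf nx) ?(negPf ny) /=; nia.
have le_sum : \sum_x \sum_y (a x * (1 - a y) + (1 - a x) * a y) <=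
               \sum_x \sum_y (m x - m y) ^+ 2.
  by apply: ler_sum => x _; apply: ler_sum => y _; apply: pair_le.
set A := \sum_x a x.
have cross : \sum_x \sum_y (a x * (1 - a y) + (1 - a x) * a y) = 2 * (A * (n%:R - A)).
  rewrite (eq_bigr (fun x => a x * (n%:R - A) + (1 - a x) * A)) => [|x _].
    by rewrite big_split /= -!mulr_suml sumrB sumr_const card_ord; ring.
  by rewrite big_split /= -!mulr_sumr sumrB sumr_const card_ord.
have A_ge1 : 1 <= A.
  rewrite /A (bigD1 i) //= {1}/a eqxx lerDl.
  by apply: sumr_ge0 => x _; rewrite ler0n.
have A_le : 1 <= n%:R - A.
  have -> : n%:R - A = \sum_x (1 - a x) by rewrite sumrB sumr_const card_ord.
  rewrite (bigD1 j) //= {1}/a eq_sym (negPf neq_ij) subr0 lerDl.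
  by apply: sumr_ge0 => x _; rewrite subr_ge0 /a; case: eqP.
rewrite sum_sqr_diff cross in le_sum.
nra.
Qed.

Lemma uniform_of_adjoint_lt (n : nat) (d : int) (m : 'I_n -> int) :
  (n <= 12)%N -> 0 <= d * (d + 3) - \sum_i m i * (m i + 1) ->
  n%:Z * (2 * d + 3) ^+ 2 < (n%:Z + 2 * \sum_i m i) ^+ 2 ->
  d * (d + 3) = \sum_i m i * (m i + 1) /\ forall i j, m i = m j.
Proof.
have -> : \sum_i m i * (m i + 1) = \sum_i m i ^+ 2 + \sum_i m i.
  by rewrite -big_split; apply: eq_bigr => i _ /=; ring.
have := variance_ge0 m; have := @const_of_variance_lt n m; rewrite natz.
set M := \sum_i m i; set Sq := \sum_i m i ^+ 2 => uniform V_ge0 n_le S_ge0 lt_sq.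
have iden : (n%:Z + 2 * M) ^+ 2 - n%:Z * (2 * d + 3) ^+ 2 =
    n%:Z * (n%:Z - 9) - 4 * (n%:Z * Sq - M ^+ 2) - 4 * n%:Z * (d * (d + 3) - (Sq + M)).
  by ring.
move: S_ge0 V_ge0 uniform; set S := _ - (Sq + M); set V := _ - M ^+ 2 => S_ge0 V_ge0 uniform.
have [S0 V_lt] : S = 0 /\ V < n%:Z - 1.
  have : 4 * V + 4 * n%:Z * S < n%:Z * (n%:Z - 9) by lia.
  have : 0 <= n%:Z <= 12 by lia.
  clear -S_ge0 V_ge0; nia.
by split; [apply/eqP; rewrite -subr_eq0 -/S S0 | apply: uniform].
Qed.

(* Multiplication of p + q sqrt (a^2 + c) by the unit (a e + 1) + e sqrt (a^2 + c), whose norm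
   is 1 when c e = 2 a. *)
Definition pell_step (a c e : int) (pq : int * int) : int * int :=
  ((a * e + 1) * pq.1 + (a ^+ 2 + c) * e * pq.2, e * pq.1 + (a * e + 1) * pq.2).

Definition pell_orbit (a c e : int) (j : nat) : int * int := iter j (pell_step a c e) (a, 1).

Section PellOrbit.
Variables a c e : int.
Hypotheses (a_gt0 : 0 < a) (c_gt0 : 0 < c) (ce : c * e = 2 * a).

Let e_gt0 : 0 < e. Proof. by rewrite -(pmulr_rgt0 _ c_gt0) ce; lia. Qed.

Let Ne : (a ^+ 2 + c) * e = a ^+ 2 * e + 2 * a.
Proof. by rewrite -ce; ring. Qed.

Let unit_norm : (a * e + 1) ^+ 2 - (a ^+ 2 + c) * e ^+ 2 = 1.
Proof. by rewrite expr2 mulrA Ne; ring. Qed.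

Lemma pell_step_norm p q : let: (p', q') := pell_step a c e (p, q) in
  p' ^+ 2 - (a ^+ 2 + c) * q' ^+ 2 = p ^+ 2 - (a ^+ 2 + c) * q ^+ 2.
Proof.
rewrite /pell_step /=.
transitivity (((a * e + 1) ^+ 2 - (a ^+ 2 + c) * e ^+ 2) * (p ^+ 2 - (a ^+ 2 + c) * q ^+ 2)).
  by ring.
by rewrite unit_norm mul1r.
Qed.

Lemma pell_orbit_norm j : let: (p, q) := pell_orbit a c e j in
  p ^+ 2 - (a ^+ 2 + c) * q ^+ 2 = - c.
Proof.
elim: j => [|j IH]; first by rewrite /=; ring.
rewrite /pell_orbit iterS -/(pell_orbit a c e j).
case: (pell_orbit a c e j) IH => p q IH.
by rewrite -[- c]IH; apply: pell_step_norm.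
Qed.

Lemma pell_orbit_parity j : exists x y : int,
  [/\ 0 <= x, 0 <= y & pell_orbit a c e j = (a + 2 * x, 1 + 2 * y)].
Proof.
elim: j => [|j [x [y [x_ge0 y_ge0 orb_j]]]].
  by exists 0, 0; split => //; congr (_, _); ring.
exists (a ^+ 2 * e + a + (a * e + 1) * x + (a ^+ 2 + c) * e * y), (a * e + e * x + (a * e + 1) * y).
split; [nia | nia | rewrite /pell_orbit iterS -/(pell_orbit a c e j) orb_j /pell_step /=].
congr (_, _); last by ring.
by rewrite Ne; ring.
Qed.

Lemma pell_back_step p q :
  0 < p -> 1 < q -> p ^+ 2 - (a ^+ 2 + c) * q ^+ 2 = - c ->
  (a ^+ 2 + c) * e * q < (a * e + 1) * p ->
  exists p0 q0, [/\ 0 < p0, 0 < q0, q0 < q, p0 ^+ 2 - (a ^+ 2 + c) * q0 ^+ 2 = - c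
                 & pell_step a c e (p0, q0) = (p, q)].
Proof.
move=> p_gt0 q_gt1 norm back_pos; have e0 := e_gt0; have q_gt0 : 0 < q by lia.
pose p0 := (a * e + 1) * p - (a ^+ 2 + c) * e * q.
pose q0 := (a * e + 1) * q - e * p.
have step0 : pell_step a c e (p0, q0) = (p, q).
  rewrite /pell_step /p0 /q0 /=; congr (_, _).
  - transitivity (((a * e + 1) ^+ 2 - (a ^+ 2 + c) * e ^+ 2) * p); first by ring.
    by rewrite unit_norm mul1r.
  - transitivity (((a * e + 1) ^+ 2 - (a ^+ 2 + c) * e ^+ 2) * q); first by ring.
    by rewrite unit_norm mul1r.
have p_sq : p ^+ 2 = (a ^+ 2 + c) * q ^+ 2 - c by rewrite -norm; ring.
have aq_lt : a * q < p.
  rewrite -(ltr_pXn2r (_ : 0 < 2)%N) ?nnegrE ?mulr_ge0 ?ltW // p_sq -subr_gt0.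
  rewrite (_ : _ - _ = c * (q ^+ 2 - 1)); last by ring.
  by rewrite pmulr_rgt0 // subr_gt0 exprn_egt1.
exists p0, q0; split => //.
- by rewrite /p0 subr_gt0.
- have u_gt0 : 0 < a * e + 1 by rewrite addr_gt0 ?mulr_gt0.
  rewrite /q0 subr_gt0 -(ltr_pXn2r (_ : 0 < 2)%N) ?nnegrE ?mulr_ge0 ?ltW // -subr_gt0.
  rewrite !exprMn p_sq.
  rewrite (_ : _ - _ = ((a * e + 1) ^+ 2 - (a ^+ 2 + c) * e ^+ 2) * q ^+ 2 + e ^+ 2 * c).
    by rewrite unit_norm mul1r addr_gt0 ?mulr_gt0 ?exprn_gt0.
  by ring.
- rewrite /q0 -subr_gt0 (_ : q - _ = e * (p - a * q)); last by ring.
  by rewrite pmulr_rgt0 // subr_gt0.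
- by move: (pell_step_norm p0 q0); rewrite step0 => <-.
Qed.

(* Descent: undoing [pell_step] keeps the norm and lowers q, down to q = 1, where p = a. *)
Lemma pell_orbit_complete :
  (forall p q, 0 < p -> 1 < q -> p ^+ 2 - (a ^+ 2 + c) * q ^+ 2 = - c ->
     (a ^+ 2 + c) * e * q < (a * e + 1) * p) ->
  forall p q, 0 < p -> 0 < q -> p ^+ 2 - (a ^+ 2 + c) * q ^+ 2 = - c ->
  exists j, pell_orbit a c e j = (p, q).
Proof.
move=> back_pos p q; have [k] := ubnP `|q|%N; elim: k p q => // k IH p q.
move=> q_lt p_gt0 q_gt0 norm; have [q1|q_ne1] := eqVneq q 1.
  exists 0%N; rewrite q1 in norm *; rewrite /pell_orbit /=; congr (_, _).
  have /eqP : p ^+ 2 = a ^+ 2 by move: norm; rewrite expr1n mulr1; lia.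
  by rewrite eqf_sqr => /orP[/eqP -> | /eqP p_eq] //; lia.
have q_gt1 : 1 < q by lia.
have [p0 [q0 [p0_gt0 q0_gt0 q0_lt norm0 step0]]] := pell_back_step p_gt0 q_gt1 norm
  (back_pos p q p_gt0 q_gt1 norm).
have [|j orb_j] := IH p0 q0 _ p0_gt0 q0_gt0 norm0; first lia.
by exists j.+1; rewrite /pell_orbit iterS -/(pell_orbit a c e j) orb_j.
Qed.

End PellOrbit.

Lemma pell3_back_step_pos (c e : int) : (c, e) \in [:: (1, 6); (2, 3); (3, 2)] ->
  forall p q, 0 < p -> 1 < q -> p ^+ 2 - (3 ^+ 2 + c) * q ^+ 2 = - c ->
  (3 ^+ 2 + c) * e * q < (3 * e + 1) * p.
Proof.
(* If the back step were not positive, the norm equation would force q <= 6; there only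
   (13, 4) and (10, 3) satisfy the linear constraints, and they miss the norm. *)
rewrite !inE => /or3P[] /eqP[-> ->] p q p_gt0 q_gt1 norm; rewrite ltNge; apply/negP => le_back.
- have q_le : q <= 6 by nia.
  nia.
- have q_le : q <= 4 by nia.
  have lt_p : 3 * q < p by nia.
  have [p13 q4] : p = 13 /\ q = 4 by lia.
  by move: norm; rewrite p13 q4.
- have q_le : q <= 3 by nia.
  have lt_p : 3 * q < p by nia.
  have [p10 q3] : p = 10 /\ q = 3 by lia.
  by move: norm; rewrite p10 q3.
Qed.

Lemma cf_PQ_S (x : RR) (k : nat) :
  cf_PQ x k.+1 = let: (_, (p, q)) := cf_PQ x k in
    ((p, q), (cf_a x k.+1 * p + (cf_PQ x k).1.1, cf_a x k.+1 * q + (cf_PQ x k).1.2)).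
Proof. by rewrite /=; case: (cf_PQ x k) => [[? ?] [? ?]]. Qed.

Section SqrtContinuedFraction.
Variables (a c e : int) (s : RR).
Hypotheses (s_ge0 : 0 <= s) (s_sq : s ^+ 2 = (a ^+ 2 + c)%:~R).
Hypotheses (a_gt0 : 0 < a) (c_gt0 : 0 < c) (ce : c * e = 2 * a).

Let cR_gt0 : 0 < (c%:~R : RR). Proof. by rewrite ltr0z. Qed.

Lemma sqrt_bounds : a%:~R < s < a%:~R + 1.
Proof.
have e_gt0 : 0 < e.
  by rewrite -(pmulr_rgt0 _ c_gt0) ce; lia.
have c_le : c <= 2 * a by rewrite -ce ler_peMr // ?ltW //; lia.
have := s_sq; rewrite rmorphD rmorphXn /= => sq.
have cle : (c%:~R : RR) <= 2 * a%:~R by rewrite -[2]/(2%:~R) -rmorphM ler_int.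
have a0 : (0 : RR) < a%:~R by rewrite ltr0z.
have c0 := cR_gt0.
have ltsq x y : 0 <= x -> 0 <= y -> x ^+ 2 < y ^+ 2 -> x < y.
  by move=> x0 y0; rewrite ltr_pXn2r ?nnegrE.
by apply/andP; split; apply: ltsq; rewrite ?sq ?s_ge0 //; nra.
Qed.

Lemma inv_sub_sqrt : (s - a%:~R)^-1 = (s + a%:~R) / c%:~R.
Proof.
have /andP[lt_as _] := sqrt_bounds.
have cE : (c%:~R : RR) = s ^+ 2 - a%:~R ^+ 2 by rewrite s_sq rmorphD rmorphXn /=; ring.
by rewrite cE; field; rewrite -cE gt_eqF //= subr_eq0 gt_eqF.
Qed.

Lemma floor_sqrt : Num.floor s = a.
Proof.
have /andP[lt_as lt_sa] := sqrt_bounds.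
by apply/eqP; rewrite floor_eq rmorphD /= (ltW lt_as).
Qed.

Let ceR : (c%:~R : RR) * e%:~R = 2 * a%:~R.
Proof. by rewrite -rmorphM ce rmorphM. Qed.

Let floor_quot : Num.floor ((s + a%:~R) / c%:~R) = e.
Proof.
have /andP[lt_as lt_sa] := sqrt_bounds.
have c_ge1 : (1 : RR) <= c%:~R by rewrite ler1z.
have ce_eq := ceR.
apply/eqP; rewrite floor_eq ler_pdivlMr // ltr_pdivrMr // rmorphD rmorph1 /=.
by apply/andP; split; nra.
Qed.

Let floor_sum : Num.floor (s + a%:~R) = 2 * a.
Proof.
have /andP[lt_as lt_sa] := sqrt_bounds.
by apply/eqP; rewrite floor_eq !rmorphD rmorphM /=; apply/andP; split; lra.
Qed.

Let cf_rem_step j :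
  cf_rem s j.*2.+1 = (s + a%:~R) / c%:~R -> cf_rem s j.*2.+2 = s + a%:~R.
Proof.
move=> odd_j; rewrite /= -/(cf_rem s j.*2.+1) odd_j floor_quot.
have -> : (s + a%:~R) / c%:~R - e%:~R = (s - a%:~R) / c%:~R.
  have -> : (e%:~R : RR) = 2 * a%:~R / c%:~R by rewrite -ceR [_ * e%:~R]mulrC mulfK ?lt0r_neq0.
  by field; rewrite lt0r_neq0.
by rewrite invf_div inv_sub_sqrt mulrC divfK ?gt_eqF.
Qed.

Lemma cf_rem_odd j : cf_rem s j.*2.+1 = (s + a%:~R) / c%:~R.
Proof.
elim: j => [|j /cf_rem_step IH]; first by rewrite /= floor_sqrt inv_sub_sqrt.
rewrite [LHS]/= -/(cf_rem s j.*2.+2) IH floor_sum rmorphM /= -inv_sub_sqrt.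
by congr (_^-1); ring.
Qed.

Lemma cf_a_sqrt k : cf_a s k = if k == 0%N then a else if odd k then e else 2 * a.
Proof.
case: k => [|k]; first exact: floor_sqrt.
rewrite /cf_a -(odd_double_half k); case: (odd k); rewrite ?add1n ?add0n !oddS odd_double.
  by rewrite cf_rem_step ?cf_rem_odd.
by rewrite cf_rem_odd.
Qed.

Lemma cf_PQ_odd j : exists p' q' : int,
  let: (p, q) := pell_orbit a c e j in
  [/\ cf_PQ s j.*2.+1 = ((p, q), (p', q')), c * p' = a * p + (a ^+ 2 + c) * q
     & c * q' = p + a * q].
Proof.
elim: j => [|j [p' [q' IH]]].
  exists (e * a + 1), e; rewrite /pell_orbit /= !cf_a_sqrt /= mulr1 addr0.
  by split=> //; rewrite ?mulrDr ?mulr1 ?mulrA ce; ring.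
rewrite /pell_orbit iterS -/(pell_orbit a c e j).
case: (pell_orbit a c e j) IH => p q [PQ hp hq].
have c0 : c != 0 by rewrite gt_eqF.
have key1 : a * p' + p = (a ^+ 2 + c) * q'.
  by apply: (mulfI c0); rewrite mulrDr mulrCA hp mulrCA hq; ring.
have key2 : a * q' + q = p'.
  by apply: (mulfI c0); rewrite mulrDr mulrCA hq hp; ring.
have hP : 2 * a * p' + p = (a * e + 1) * p + (a ^+ 2 + c) * e * q.
  by rewrite -ce mulrAC hp; ring.
have hQ : 2 * a * q' + q = e * p + (a * e + 1) * q.
  by rewrite -ce mulrAC hq; ring.
exists (e * (2 * a * p' + p) + p'), (e * (2 * a * q' + q) + q').
rewrite doubleS (cf_PQ_S s j.*2.+2) (cf_PQ_S s j.*2.+1) PQ /= !cf_a_sqrt /= odd_double /=.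
rewrite -hP -hQ; split => //.
- rewrite mulrDr mulrA ce hp.
  rewrite (_ : _ * (2 * a * q' + q) = 2 * a * ((a ^+ 2 + c) * q') + (a ^+ 2 + c) * q); last by ring.
  by rewrite -key1; ring.
- by rewrite mulrDr mulrA ce hq -key2; ring.
Qed.

End SqrtContinuedFraction.

Lemma near_square_cases (n : nat) : (10 <= n <= 12)%N ->
  exists c e : int, (c, e) \in [:: (1, 6); (2, 3); (3, 2)] /\ n%:Z = 3 ^+ 2 + c.
Proof.
move=> hn; have : n = 10%N \/ n = 11%N \/ n = 12%N by lia.
by case=> [->|[->|->]]; [exists 1, 6 | exists 2, 3 | exists 3, 2].
Qed.

Section SmallSqrt.
Variables (n : nat) (hn : (10 <= n <= 12)%N).
Let s : RR := Num.sqrt n%:R.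

Let cf_data : exists c e : int, [/\ (c, e) \in [:: (1, 6); (2, 3); (3, 2)],
  n%:Z = 3 ^+ 2 + c, 0 < c, c * e = 2 * 3 & s ^+ 2 = (3 ^+ 2 + c)%:~R].
Proof.
have [c [e [ce_case nE]]] := near_square_cases hn.
have [c_gt0 ce] : 0 < c /\ c * e = 2 * 3.
  by move: ce_case; rewrite !inE => /or3P[] /eqP[-> ->].
by exists c, e; split=> //; rewrite sqr_sqrtr ?ler0n // -nE.
Qed.

Lemma odd_convergent_sol j : exists x y : int,
  [/\ 0 <= x, 0 <= y, conv_p s j.*2.+1 = 2 * x + 3, conv_q s j.*2.+1 = 2 * y + 1
    & x * (x + 3) = n%:Z * (y * (y + 1))].
Proof.
have [c [e [_ nE c_gt0 ce s_sq]]] := cf_data.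
have [p' [q']] := cf_PQ_odd (sqrtr_ge0 _) s_sq (ltr0Sn _ 2) c_gt0 ce j.
have := pell_orbit_norm ce j.
have [x [y [x_ge0 y_ge0 ->]]] := pell_orbit_parity (ltr0Sn _ 2) c_gt0 ce j.
move=> norm [PQ _ _]; exists x, y; split => //.
- by rewrite /conv_p PQ /= addrC.
- by rewrite /conv_q PQ /= addrC.
- by rewrite nE; lia.
Qed.

Lemma convergent_of_sol (x y : int) :
  0 <= x -> 0 <= y -> x * (x + 3) = n%:Z * (y * (y + 1)) ->
  exists j, conv_p s j.*2.+1 = 2 * x + 3 /\ conv_q s j.*2.+1 = 2 * y + 1.
Proof.
move=> x_ge0 y_ge0 sol.
have [c [e [ce_case nE c_gt0 ce s_sq]]] := cf_data.
have norm : (2 * x + 3) ^+ 2 - (3 ^+ 2 + c) * (2 * y + 1) ^+ 2 = - c.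
  by move: sol; rewrite nE; lia.
have [||j orb] := pell_orbit_complete (ltr0Sn _ 2) c_gt0 ce (pell3_back_step_pos ce_case) _ _ norm.
  1,2: lia.
have := cf_PQ_odd (sqrtr_ge0 _) s_sq (ltr0Sn _ 2) c_gt0 ce j.
by rewrite orb => -[p' [q' [PQ _ _]]]; exists j; rewrite /conv_p /conv_q PQ.
Qed.

End SmallSqrt.

Lemma odd_convergent_divisor (n : nat) (hn : (10 <= n <= 12)%N) (X Y : 'I_n -> CC) (k : nat) :
  odd k ->
  [/\ (2 %| conv_p (Num.sqrt (n%:R)) k - 3)%Z, (2 %| conv_q (Num.sqrt (n%:R)) k - 1)%Z,
      effective X Y (dk n k) (fun _ => mk n k),
      chi (dk n k) (fun _ : 'I_n => mk n k) = 1 &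
      2 * dot (B_deg n) (@E_mul n) (rdeg (dk n k)) (rmul (fun _ : 'I_n => mk n k))
        < dot (B_deg n) (@E_mul n) K_deg (@K_mul n)].
Proof.
move=> k_odd; rewrite -(odd_double_half k) k_odd add1n; set j := k./2.
have [x [y [x_ge0 y_ge0 cp cq sol]]] := odd_convergent_sol hn j.
have -> : dk n j.*2.+1 = x by rewrite /dk cp addrK mulKz.
have -> : mk n j.*2.+1 = y by rewrite /mk cq addrK mulKz.
rewrite cp cq !addrK; split; [exact/dvdz_mulr/dvdzz | exact/dvdz_mulr/dvdzz | | |].
- have [d xE] : exists d : nat, x = d by exists `|x|%N; rewrite gez0_abs.
  have [m yE] : exists m : nat, y = m by exists `|y|%N; rewrite gez0_abs.
  rewrite xE yE in sol *; apply: (effective_of_dim_count X Y (m := fun _ => m)).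
  by rewrite sum_nat_const card_ord; nia.
- by rewrite chiE sumr_const card_ord -[_ *+ n]mulr_natl [n%:R]natz -sol subrr mul0r addr0.
- rewrite dot_E dot_EK sumr_const card_ord /B_deg rmorphMn -(mulr_natl y%:~R n) /=.
  have sq_lt : ((2 * x + 3)%:~R : RR) ^+ 2 < n%:R * (2 * y + 1)%:~R ^+ 2.
    by rewrite -!rmorphXn -[n%:R]/((n%:Z)%:~R : RR) -intrM ltr_int; lia.
  have := sqrt_mul_lt _ _ sq_lt; rewrite !ler0z !intrD !intrM /=.
  by move=> /(_ ltac:(lia) ltac:(lia)); lra.
Qed.

Lemma adjoint_negative_divisor_convergent (n : nat) (hn : (10 <= n <= 12)%N) (X Y : 'I_n -> CC)
    (d : int) (m : 'I_n -> int) :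
  effective X Y d m -> 1 <= chi d m ->
  (exists t : RR, ample X Y t (@E_mul n) /\
     2 * dot t (@E_mul n) (rdeg d) (rmul m) < dot t (@E_mul n) K_deg (@K_mul n)) ->
  exists k : nat, [/\ odd k, d = dk n k & forall i, m i = mk n k].
Proof.
move=> eff chi_ge1 [t [/ample_At_gt [t_gt0 n_lt] adj]].
have d_ge0 := effective_deg_ge0 eff.
rewrite chiE lerDl ler_pdivlMr // mul0r ler0z in chi_ge1.
rewrite dot_E dot_EK in adj; set M := \sum_i m i in adj.
have adj' : t * (2 * d + 3)%:~R < (n%:Z + 2 * M)%:~R.
  by rewrite !intrD !intrM /=; lra.
have sum_pos : 0 < n%:Z + 2 * M.
  rewrite -(ltr0z RR); apply: lt_trans adj'; rewrite mulr_gt0 // ltr0z; lia.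
have lt_sq : n%:Z * (2 * d + 3) ^+ 2 < (n%:Z + 2 * M) ^+ 2.
  rewrite -(ltr_int RR) intrM !rmorphXn /=; apply: sqr_lt_of_mul_lt n_lt t_gt0 _ adj'.
  by rewrite ltr0z; lia.
have [|sol m_const] := uniform_of_adjoint_lt _ chi_ge1 lt_sq; first lia.
have n_gt0 : (0 < n)%N by lia.
pose mu := m (Ordinal n_gt0).
have sum_const_m (F : int -> int) : \sum_i F (m i) = n%:Z * F mu.
  rewrite (eq_bigr (fun=> F mu)); last by move=> k _; rewrite (m_const k (Ordinal n_gt0)).
  by rewrite sumr_const card_ord -mulr_natl natz.
rewrite (sum_const_m (fun z => z * (z + 1))) in sol.
have mu_ge0 : 0 <= mu by move: sum_pos; rewrite /M (sum_const_m id); nia.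
have [j [cp cq]] := convergent_of_sol hn d_ge0 mu_ge0 sol.
exists j.*2.+1; split=> [|| i]; first by rewrite /= odd_double.
  by rewrite /dk cp addrK mulKz.
by rewrite /mk cq addrK mulKz //; apply: m_const.
Qed.

Theorem theorem4p8 (n : nat) (hn : (10 <= n <= 12)%N) :
  very_general (fun X Y : 'I_n -> CC =>
    (* (1) *)
    (forall k : nat, odd k ->
       (2 %| conv_p (Num.sqrt (n%:R)) k - 3)%Z /\
       (2 %| conv_q (Num.sqrt (n%:R)) k - 1)%Z /\
       effective X Y (dk n k) (fun _ => mk n k) /\
       chi (dk n k) (fun _ : 'I_n => mk n k) = 1 /\
       2 * dot (B_deg n) (@E_mul n) (rdeg (dk n k)) (rmul (fun _ : 'I_n => mk n k))
         < dot (B_deg n) (@E_mul n) K_deg (@K_mul n))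
    /\
    (* (2) *)
    (forall (d : int) (m : 'I_n -> int),
       effective X Y d m -> 1 <= chi d m ->
       (exists t : RR, ample X Y t (@E_mul n) /\
          2 * dot t (@E_mul n) (rdeg d) (rmul m) < dot t (@E_mul n) K_deg (@K_mul n)) ->
       exists k : nat, odd k /\ d = dk n k /\ forall i, m i = mk n k)).
Proof.
(* Both parts hold for every configuration of points. *)
exists (fun _ => 1); split=> [_|X Y _]; first exact: oner_neq0.
split=> [k k_odd | d m eff chi_ge1 adj].
  by case: (odd_convergent_divisor hn X Y k_odd).
by have [k [? ? ?]] := adjoint_negative_divisor_convergent hn eff chi_ge1 adj; exists k.
Qed.
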